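(* For $n\ge 5$, every two bases of $\Theta_n$ intersect, every two bases of $\Theta_n^\star$ intersect, and $f(\Theta_n)\le n-2$.
   Context: For $n\ge 1$, $\Theta_n$ is the matroid on ground set $X\cup Y$ with $X=\{x_1,\dots,x_n\}$, $Y=\{y_1,\dots,y_n\}$ disjoint, whose bases are the $n$-subsets $B\subseteq X\cup Y$ with $|B\cap X|\le 2$ and $B\neq(Y\setminus\{y_i\})\cup\{x_i\}$ for all $i$. For a matroid $M$, the distance between bases $B,B'$ is $|B\triangle B'|$; the Borsuk number $f(M)$ is the minimum number of parts in a partition of the set of bases in which each part has diameter strictly smaller than the diameter of the set of all bases ($f(M)=+\infty$ if $M$ has one basis). *)

From mathcomp Require Import all_boot all_order.
Set Implicit Arguments. Unset Strict Implicit. Unset Printing Implicit Defensive.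

Section Matroids.
Variable T : finType.

Definition bdist (B B' : {set T}) : nat := #|(B :\: B') :|: (B' :\: B)|.

(* diameter of a family of sets (0 for the empty family) *)
Definition diam (F : {set {set T}}) : nat :=
  \max_(B in F) \max_(B' in F) bdist B B'.

Definition dual_bases (Bs : {set {set T}}) : {set {set T}} :=
  [set ~: B | B in Bs].

Definition pairwise_intersecting (Bs : {set {set T}}) : Prop :=
  forall B B', B \in Bs -> B' \in Bs -> B :&: B' != set0.

Definition borsuk_partition (Bs : {set {set T}}) (P : {set {set {set T}}}) : Prop :=
  partition P Bs /\ forall A, A \in P -> diam A < diam Bs.

(* f(M) <= k  (with f(M) = +oo meaning no such partition exists) *)
Definition borsuk_le (Bs : {set {set T}}) (k : nat) : Prop :=
  exists P, borsuk_partition Bs P /\ #|P| <= k.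
End Matroids.

(* Ground set X ∪ Y encoded as 'I_n + 'I_n: x_i = inl i, y_i = inr i. *)
Definition thX n : {set 'I_n + 'I_n} := [set inl i | i : 'I_n].
Definition thY n : {set 'I_n + 'I_n} := [set inr i | i : 'I_n].

Definition theta_bases n : {set {set 'I_n + 'I_n}} :=
  [set B : {set 'I_n + 'I_n} |
     [&& #|B| == n, #|B :&: thX n| <= 2 &
         [forall i : 'I_n, B != inl i |: (thY n :\ inr i)]]].

From mathcomp Require Import all_boot all_order zify.
Set Implicit Arguments. Unset Strict Implicit. Unset Printing Implicit Defensive.

(* A basis B of Theta_n lies in (B :&: X) :|: Y with #|B :&: X| <= 2, so any two bases satisfy
   #|B :|: B'| + #|B :&: B' :&: X| <= #|B :&: X| + #|B' :&: X| + n.  For n >= 5 this rules out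
   B :&: B' = set0 and B :|: B' = X :|: Y, and it bounds the distance 2 (n - #|B :&: B'|) by
   2 (#|B :&: X| + #|B' :&: X| - #|B :&: B' :&: X|) <= 8; the value 8 is attained by
   {x0, x1} :|: Y :\: {y0, y1} and {x2, x3} :|: Y :\: {y2, y3}.  Classify a basis by the least
   index of an element of X it contains, capped at n - 3: this gives n - 2 classes, and two bases
   of a class with two elements of X each share one, either the common least one or, by
   pigeonhole, one of x_(n-3), x_(n-2), x_(n-1).  So each class has diameter at most 6. *)

Section BigMinn.
Variables (I : eqType) (r : seq I) (P : pred I) (F : I -> nat) (m : nat).

Lemma bigminn_le_id : \big[minn/m]_(i <- r | P i) F i <= m.
Proof. by elim/big_rec: _ => // i x _; apply: leq_trans (geq_minr _ _). Qed.

Lemma bigminn_leq i : i \in r -> P i -> \big[minn/m]_(j <- r | P j) F j <= F i.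
Proof.
elim: r => // j s IH; rewrite inE big_cons => /predU1P[-> -> | si Pi].
  exact: geq_minl.
by case: ifP => _; [apply: leq_trans (geq_minr _ _) _|]; exact: IH.
Qed.

Lemma bigminn_attained : \big[minn/m]_(i <- r | P i) F i < m ->
  exists2 i, P i & F i = \big[minn/m]_(j <- r | P j) F j.
Proof.
elim/big_rec: _ => [|i x Pi IH]; first by rewrite ltnn.
case: (leqP (F i) x) => [le_Fx|lt_xF] lt_m.
  by exists i => //; rewrite (minn_idPl le_Fx).
exact: IH.
Qed.
End BigMinn.

Lemma card_ord_geq n m : #|[set i : 'I_n | m <= i]| = n - m.
Proof.
rewrite cardsE cardE /enum_mem -enumT size_filter.
rewrite -(count_map val (fun k => m <= k)) val_enum_ord.
elim: n => // n IH; rewrite -addn1 iotaD count_cat IH /=; case: leqP; lia.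
Qed.

Section Diameter.
Variable T : finType.
Implicit Types (A B : {set T}) (F : {set {set T}}).

Lemma bdistE A B : bdist A B = #|A :\: B| + #|B :\: A|.
Proof.
rewrite /bdist cardsU; suff -> : (A :\: B) :&: (B :\: A) = set0 by rewrite cards0 subn0.
by apply/setP => x; rewrite !inE; case: (x \in A); case: (x \in B).
Qed.

Lemma bdist_card k A B : #|A| = k -> #|B| = k -> bdist A B = (k - #|A :&: B|).*2.
Proof. by move=> cA cB; rewrite bdistE !cardsD setIC cA cB addnn. Qed.

Lemma bdist_le_diam F A B : A \in F -> B \in F -> bdist A B <= diam F.
Proof.
move=> FA FB; apply: leq_trans (leq_bigmax_cond _ FA); exact: leq_bigmax_cond.
Qed.

Lemma diam_le F k : {in F &, forall A B, bdist A B <= k} -> diam F <= k.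
Proof.
move=> le_k; apply/bigmax_leqP => A FA; apply/bigmax_leqP => B FB; exact: le_k.
Qed.

Lemma card_preim_partition (I : finType) (f : T -> I) D :
  #|preim_partition f D| <= #|I|.
Proof.
apply: leq_trans (_ : #|[set [set y in D | c == f y] | c : I]| <= _).
  apply/subset_leq_card/subsetP => _ /imsetP[x Dx ->].
  by apply/imsetP; exists (f x).
exact: leq_imset_card.
Qed.
End Diameter.

Section Theta.
Variable n : nat.
Local Notation T := ('I_n + 'I_n)%type.
Local Notation Bs := (theta_bases n).
Implicit Types (A B : {set T}).

Lemma mem_thX (z : T) : (z \in thX n) = if z is inl _ then true else false.
Proof. by case: z => i; [exact: imset_f | apply/imsetP => -[]]. Qed.

Lemma mem_thY (z : T) : (z \in thY n) = if z is inr _ then true else false.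
Proof. by case: z => i; [apply/imsetP => -[] | exact: imset_f]. Qed.

Lemma card_thY : #|thY n| = n.
Proof. by rewrite card_imset ?card_ord //; exact: inr_inj. Qed.

Lemma card_le_thX A : #|A| <= #|A :&: thX n| + n.
Proof.
rewrite -[X in _ + X]card_thY; apply: leq_trans (leq_card_setU _ _).1.
by apply/subset_leq_card/subsetP => -[] i Ai; rewrite !inE mem_thX mem_thY Ai.
Qed.

Lemma card_setU_le_thX A B :
  #|A :|: B| + #|A :&: B :&: thX n| <= #|A :&: thX n| + #|B :&: thX n| + n.
Proof.
have := card_le_thX (A :|: B); rewrite setIUl.
have := cardsUI (A :&: thX n) (B :&: thX n); rewrite setIACA setIid; lia.
Qed.

Lemma theta_bases_card B : B \in Bs -> #|B| = n /\ #|B :&: thX n| <= 2.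
Proof. by rewrite inE => /and3P[/eqP -> -> _]. Qed.

Lemma theta_bdist B B' : B \in Bs -> B' \in Bs ->
  bdist B B' + (#|B :&: B' :&: thX n|).*2 <= (#|B :&: thX n| + #|B' :&: thX n|).*2.
Proof.
case/theta_bases_card => cB _ /theta_bases_card[cB' _].
have := card_setU_le_thX B B'; have := cardsUI B B'.
have := subset_leq_card (subsetIl B B').
rewrite (bdist_card cB cB') cB cB'; lia.
Qed.

Hypothesis n_ge5 : 5 <= n.

Lemma theta_bases_intersect : pairwise_intersecting Bs.
Proof.
move=> B B' /theta_bases_card[cB XB] /theta_bases_card[cB' XB'].
have := card_setU_le_thX B B'; have := cardsUI B B'.
rewrite -card_gt0 cB cB'; lia.
Qed.

Lemma theta_dual_bases_intersect : pairwise_intersecting (dual_bases Bs).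
Proof.
move=> _ _ /imsetP[B BsB ->] /imsetP[B' BsB' ->].
rewrite -setCU -card_gt0 cardsCs setCK.
have := card_setU_le_thX B B'.
case/theta_bases_card: BsB => _ XB; case/theta_bases_card: BsB' => _ XB'.
rewrite card_sum card_ord; lia.
Qed.

Definition two_X_base (a b : 'I_n) : {set T} :=
  inl a |: (inl b |: (thY n :\ inr a :\ inr b)).

Lemma two_X_base_thX a b : two_X_base a b :&: thX n = [set inl a; inl b].
Proof. by apply/setP => -[] i; rewrite !inE mem_thX mem_thY ?andbF ?andbT ?orbF. Qed.

Lemma card_two_X_base a b : a != b -> #|two_X_base a b| = n.
Proof.
move=> ab; rewrite !cardsU1 !inE !mem_thY /= (inj_eq inl_inj) orbF ab.
rewrite -[in RHS]card_thY (cardsD1 (inr a) (thY n)) (cardsD1 (inr b) (thY n :\ inr a)).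
by rewrite !inE !mem_thY (inj_eq inr_inj) [b == a]eq_sym ab.
Qed.

Lemma special_thX i : (inl i |: (thY n :\ inr i)) :&: thX n = [set inl i].
Proof. by apply/setP => -[] j; rewrite !inE mem_thX mem_thY ?andbF ?andbT ?orbF. Qed.

Lemma two_X_base_theta a b : a != b -> two_X_base a b \in Bs.
Proof.
move=> ab; rewrite inE card_two_X_base // eqxx two_X_base_thX cards2.
rewrite (inj_eq inl_inj) ab /=; apply/forallP => i; apply/eqP => eq_ab.
have := congr1 (fun B => #|B :&: thX n|) eq_ab.
by rewrite /= two_X_base_thX special_thX cards1 cards2 (inj_eq inl_inj) ab.
Qed.

Lemma card_two_X_base_setD a b c d : uniq [:: a; b; c; d] ->
  4 <= #|two_X_base a b :\: two_X_base c d|.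
Proof.
rewrite /= !inE !negb_or => /and4P[/and3P[ab ac ad] /andP[bc bd] cd _].
have uniq_s : uniq [:: inl a; inl b; inr c; inr d].
  by rewrite /= !inE (inj_eq inl_inj) (inj_eq inr_inj) (negbTE ab) cd.
apply: leq_trans (eq_leq (esym (card_uniqP uniq_s))) _.
apply/subset_leq_card/subsetP => z.
rewrite !inE !mem_thY => /or4P[] /eqP-> /=.
all: rewrite ?(inj_eq inl_inj) ?(inj_eq inr_inj) ?eqxx ?orbT ?andbT /=.
all: by rewrite ?[c == _]eq_sym ?[d == _]eq_sym ?negb_or ?ab ?ac ?ad ?bc ?bd ?cd.
Qed.

Lemma theta_diam_ge8 : 8 <= diam Bs.
Proof.
have lt_n k : k < 4 -> k < n by move=> ?; lia.
pose o k (lt_k4 : k < 4) := Ordinal (lt_n k lt_k4).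
pose B := two_X_base (o 0 isT) (o 1 isT); pose B' := two_X_base (o 2 isT) (o 3 isT).
have BsB : B \in Bs by exact: two_X_base_theta.
have BsB' : B' \in Bs by exact: two_X_base_theta.
apply: leq_trans (bdist_le_diam BsB BsB').
by rewrite bdistE -[8]/(4 + 4) leq_add // card_two_X_base_setD.
Qed.

Definition first_X B : nat := \big[minn/(n - 3)]_(i | inl i \in B) val i.

Lemma first_X_lt B : first_X B < n - 2.
Proof. by apply: leq_ltn_trans (bigminn_le_id _ _ _ _) _; lia. Qed.

Definition x_class B : 'I_(n - 2) := Ordinal (first_X_lt B).

Lemma first_X_meet B B' : first_X B = first_X B' ->
  #|B :&: thX n| = 2 -> #|B' :&: thX n| = 2 -> 0 < #|B :&: B' :&: thX n|.
Proof.
move=> eq_fX cB cB'; case: (ltnP (first_X B) (n - 3)) => [small | large].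
  have [i Bi fXi] := bigminn_attained small.
  rewrite eq_fX in small; have [i' B'i' fXi'] := bigminn_attained small.
  have eq_i : i' = i by apply: val_inj; rewrite /= fXi fXi'.
  rewrite {}eq_i in B'i'.
  by apply/card_gt0P; exists (inl i); rewrite !inE Bi B'i' mem_thX.
have X_large C : n - 3 <= first_X C -> C :&: thX n \subset inl @: [set i : 'I_n | n - 3 <= i].
  move=> le_fX; apply/subsetP => -[i|i]; rewrite !inE mem_thX ?andbF ?andbT // => Ci.
  apply: imset_f; rewrite inE; apply: leq_trans le_fX _.
  exact: (bigminn_leq val (n - 3) (mem_index_enum i) Ci).
have := cardsUI (B :&: thX n) (B' :&: thX n); rewrite setIACA setIid cB cB'.
have : #|(B :&: thX n) :|: (B' :&: thX n)| <= 3.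
  apply: leq_trans (subset_leq_card (setUSS (X_large _ large) (X_large B' _))) _.
    by rewrite -eq_fX.
  by rewrite setUid; apply: leq_trans (leq_imset_card _ _) _; rewrite card_ord_geq; lia.
lia.
Qed.

Lemma x_class_bdist B B' : B \in Bs -> B' \in Bs -> x_class B = x_class B' ->
  bdist B B' <= 6.
Proof.
move=> BsB BsB' /(congr1 val) /= eq_fX; have := theta_bdist BsB BsB'.
case/theta_bases_card: BsB => _ XB; case/theta_bases_card: BsB' => _ XB'.
have [/andP[/eqP cB /eqP cB']|] := boolP ((#|B :&: thX n| == 2) && (#|B' :&: thX n| == 2)).
  by have := first_X_meet eq_fX cB cB'; lia.
rewrite negb_and => /orP[] /eqP; lia.
Qed.
End Theta.

Theorem proposition6p1 (n : nat) (hn : 5 <= n) :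
  pairwise_intersecting (theta_bases n) /\
  pairwise_intersecting (dual_bases (theta_bases n)) /\
  borsuk_le (theta_bases n) (n - 2).
Proof.
split; first exact: theta_bases_intersect.
split; first exact: theta_dual_bases_intersect.
exists (preim_partition (x_class hn) (theta_bases n)); split; last first.
  by apply: leq_trans (card_preim_partition _ _) _; rewrite card_ord.
split; first exact: preim_partitionP.
move=> _ /imsetP[B _ ->].
apply: (@leq_ltn_trans 6); last exact: leq_trans _ (theta_diam_ge8 hn).
apply: diam_le => C C' /setIdP[BsC /eqP eBC] /setIdP[BsC' /eqP eBC'].
by apply: x_class_bdist; rewrite -?eBC.
Qed.
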